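(* Let $n\ge 1$. (i) Let $p_0 > 1$ be such that $U(n,p_0) = 1$ (i.e. the identity matrix is optimal at $p_0$). Then for every $1 \le p < p_0$ we have $U(n,p)=1$, and every $n\times n$ real matrix $A$ whose rows are $\ell_p$-unit vectors and with $\mathrm{per}(A)=1$ has each row equal to $\pm$ a standard basis vector. (ii) Let $1\le p_0<\infty$ be such that $U(n,p_0) = n!/n^{n/p_0}$ (i.e. the matrix all of whose entries equal $n^{-1/p_0}$ is optimal at $p_0$). Then for every $p_0 < p < \infty$ we have $U(n,p) = n!/n^{n/p}$, and every $n\times n$ real matrix $A$ whose rows are $\ell_p$-unit vectors and with $\mathrm{per}(A) = n!/n^{n/p}$ has all entries of absolute value $n^{-1/p}$.
   Context: For $n\ge 1$ and $1 \le p \le \infty$, $U(n,p)$ denotes the maximum of $\mathrm{per}(A)=\sum_{\sigma\in S_n}\prod_{i=1}^n a_{i\sigma(i)}$ over all real $n\times n$ matrices $A$ each of whose rows has $\ell_p$-norm equal to $1$. *)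

From HB Require Import structures.
From mathcomp Require Import all_boot all_order all_algebra all_fingroup.
From mathcomp Require Import all_classical all_reals all_analysis.
Set Implicit Arguments. Unset Strict Implicit. Unset Printing Implicit Defensive.
Import Order.TTheory GRing.Theory Num.Theory.
Local Open Scope ring_scope.
Local Open Scope classical_set_scope.

Definition per (R : realType) (n : nat) (A : 'M[R]_n) : R :=
  \sum_(s : 'S_n) \prod_(i < n) A i (s i).

Definition row_lp_unit (R : realType) (n : nat) (p : \bar R) (A : 'M[R]_n) (i : 'I_n) : Prop :=
  match p with
  | EFin q => (\sum_(j < n) `|A i j| `^ q) `^ q^-1 = 1
  | +oo%E => \big[Num.max/0]_(j < n) `|A i j| = 1
  | -oo%E => False
  end.

Definition rows_lp_unit (R : realType) (n : nat) (p : \bar R) (A : 'M[R]_n) : Prop :=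
  forall i, row_lp_unit p A i.

(* U(n,p): the maximum (= supremum, attained by compactness) of per over
   matrices whose rows are l_p unit vectors *)
Definition U (R : realType) (n : nat) (p : \bar R) : R :=
  sup [set per A | A in [set A : 'M[R]_n | rows_lp_unit p A]].

(* Write each row a_i of A as d_i b_i, where d_i is its l_p0-norm and b_i an
   l_p0-unit vector.  By multilinearity per A = (prod_i d_i) per B, and per B is at
   most U(n, p0).  For an l_p-unit vector the l_p0-norm is at most 1 when p < p0,
   with equality only at the vectors +-e_j, and at most n^(1/p0 - 1/p) when
   p0 < p, by the power-mean inequality, with equality only for flat vectors.
   Hence U(n, p) <= U(n, p0) resp. n^(n/p0 - n/p) U(n, p0); the identity resp. the
   flat matrix attains this bound, and at an extremal A every row is extremal. *)

From HB Require Import structures.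
From mathcomp Require Import all_boot all_order all_algebra all_fingroup.
From mathcomp Require Import all_classical all_reals all_analysis.
From mathcomp Require Import ring lra.
Import Order.TTheory GRing.Theory Num.Theory.
Local Open Scope ring_scope.
Set Implicit Arguments. Unset Strict Implicit. Unset Printing Implicit Defensive.

Section PowerInequalities.
Variable R : realType.

Lemma powR_leif_bernoulli (r t : R) : 0 < r < 1 -> 0 <= t ->
  t `^ r <= r * t + (1 - r) ?= iff (t == 1).
Proof.
move=> /andP[r0 r1] t0; apply/leifP; have [->|t1] := eqVneq t 1.
  by rewrite powR1; apply/eqP; ring.
move: t0; rewrite le_eqVlt => /predU1P[<-|t0]; first by rewrite powR0 ?gt_eqF //; lra.
(* The tangent line of expR at m = ln (t `^ r), taken at ln t and at ln 1 = 0: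
   the (r, 1 - r)-average of these two tangent values is exactly t `^ r. *)
pose m := r * ln t.
have lnt0 : ln t != 0 by rewrite ln_eq0.
have m0 : m != 0 by rewrite /m mulf_neq0 // gt_eqF.
have lt_t : expR m * (1 + (ln t - m)) < t.
  have Et : t = expR m * expR (ln t - m) by rewrite -expRD addrC subrK lnK.
  rewrite {2}Et ltr_pM2l ?expR_gt0 // expR_gt1Dx // /m.
  by rewrite -{1}[ln t]mul1r -mulrBl mulf_neq0 // subr_eq0 gt_eqF.
have lt_1 : expR m * (1 - m) < 1.
  have E1 : 1 = expR m * expR (- m) by rewrite -expRD subrr expR0.
  by rewrite {2}E1 ltr_pM2l ?expR_gt0 // expR_gt1Dx ?oppr_eq0.
have -> : t `^ r = r * (expR m * (1 + (ln t - m))) + (1 - r) * (expR m * (1 - m)).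
  by rewrite /powR gt_eqF // /m; ring.
have r1' : 0 < 1 - r by rewrite subr_gt0.
by rewrite -(ltr_pM2l r0) in lt_t; rewrite -(ltr_pM2l r1') in lt_1; lra.
Qed.

Lemma powRK (s x : R) : s != 0 -> 0 <= x -> (x `^ s) `^ s^-1 = x.
Proof. by move=> s0 x0; rewrite -powRrM divff // powRr1. Qed.

Lemma powR_leif_gt (a p q : R) : 0 <= a <= 1 -> 0 < p < q ->
  a `^ q <= a `^ p ?= iff (a == 0) || (a == 1).
Proof.
move=> /andP[a0 a1] /andP[p0 pq]; have q0 := lt_trans p0 pq; apply/leifP.
have [->|an0] := eqVneq a 0; first by rewrite /= !powR0 // gt_eqF.
have [->|an1] := eqVneq a 1; first by rewrite /= !powR1.
have lna : ln a < 0 by rewrite ln_lt0 // lt_def an0 a0 lt_neqAle an1 a1.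
by rewrite /powR (negbTE an0) ltr_expR ltr_nM2r.
Qed.

Lemma powR_leif (s x y : R) C : 0 < s -> 0 <= x -> 0 <= y ->
  (x `^ s <= y `^ s ?= iff C) = (x <= y ?= iff C).
Proof. by move=> s0 x0 y0; apply: (mono_in_leif (le_mono_in (gt0_ltr_powR s0))). Qed.

Variable n : nat.

Lemma sum_powR_leif (r : R) (y : 'I_n -> R) : (0 < n)%N -> 0 < r < 1 ->
  (forall j, 0 <= y j) -> \sum_j y j = 1 ->
  \sum_j y j `^ r <= n%:R `^ (1 - r) ?= iff [forall j, y j == n%:R^-1].
Proof.
move=> n0 r01 y0 y1; have nR0 : 0 < n%:R :> R by rewrite ltr0n.
have nR_neq0 : n%:R != 0 :> R by rewrite gt_eqF.
have c0 : 0 < n%:R `^ (- r) :> R by rewrite powR_gt0.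
have Ey j : y j `^ r = n%:R `^ (- r) * (n%:R * y j) `^ r.
  by rewrite powRM ?y0 ?ler0n // mulrA -powRD ?addNr ?powRr0 ?mul1r // nR_neq0 implybT.
have Esum : \sum_(j < n) n%:R `^ (- r) * (r * (n%:R * y j) + (1 - r)) = n%:R `^ (1 - r).
  rewrite -mulr_sumr big_split /= -!mulr_sumr y1 sumr_const card_ord.
  by rewrite powRD ?nR_neq0 ?implybT // powRr1 ?ler0n //; ring.
have Econd : [forall j, n%:R * y j == 1] = [forall j, y j == n%:R^-1].
  apply: eq_forallb => j; apply/eqP/eqP => [h|->]; last exact: divff.
  by rewrite -[y j](mulKf nR_neq0) h mulr1.
rewrite -Esum -Econd (eq_bigr _ (fun j _ => Ey j)); apply: leif_sum => j _.
rewrite (mono_leif (ler_pM2l c0)).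
by apply: powR_leif_bernoulli => //; rewrite mulr_ge0 ?ler0n ?y0.
Qed.

Lemma powR_natE (x : R) : (0 < n)%N -> n%:R `^ x = expR (x * ln n%:R).
Proof. by move=> n0; rewrite /powR pnatr_eq0 (negbTE (lt0n_neq0 n0)). Qed.

End PowerInequalities.

Section LpNorm.
Variables (R : realType) (n : nat).
Implicit Types (p q : \bar R) (v : 'I_n -> R).

Definition lp_norm p v : R :=
  match p with
  | EFin q => (\sum_(j < n) `|v j| `^ q) `^ q^-1
  | +oo%E => \big[Num.max/0]_(j < n) `|v j|
  | -oo%E => 0
  end.

Lemma rows_lp_unitE p (A : 'M[R]_n) : (0 < p)%E ->
  rows_lp_unit p A <-> forall i, lp_norm p (A i) = 1.
Proof. by case: p. Qed.

Lemma ler_lp_norm p v j : (0 < p)%E -> `|v j| <= lp_norm p v.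
Proof.
case: p => [p||] //= p0; last exact: le_bigmax.
rewrite lte_fin in p0; rewrite -{1}[`|v j|](powRK (lt0r_neq0 p0)) //.
apply: ge0_ler_powR; rewrite ?invr_ge0 ?(ltW p0) ?nnegrE ?powR_ge0 ?sumr_ge0 //.
by rewrite (bigD1 j) //= lerDl sumr_ge0.
Qed.

Lemma lp_norm_gt0 p v : (0 < p)%E -> (exists j, v j != 0) -> 0 < lp_norm p v.
Proof. by move=> p0 [j vj]; apply: lt_le_trans (ler_lp_norm v j p0); rewrite normr_gt0. Qed.

Lemma lp_norm_neq0 p v : (0 < p)%E -> lp_norm p v != 0 -> exists j, v j != 0.
Proof.
move=> p0; apply: contra_neqP => /forallNP v0.
have {}v0 j : `|v j| = 0 by apply/normr0P/negPn/negP/v0.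
case: p p0 => [p||] //= p0.
  by rewrite big1 ?powR0 ?invr_eq0 ?gt_eqF // => j _; rewrite v0 powR0 ?gt_eqF.
by apply: (big_ind (fun x : R => x = 0)) => // x y -> ->; exact: maxxx.
Qed.

Lemma lp_norm_divr p v d : (0 < p)%E -> 0 < d ->
  lp_norm p (fun j => v j / d) = lp_norm p v / d.
Proof.
move=> p0 d0; have d0' : 0 <= d^-1 by rewrite invr_ge0 ltW.
case: p p0 => [p||] //= p0.
  rewrite lte_fin in p0.
  under eq_bigr do rewrite normrM (ger0_norm d0') powRM //.
  by rewrite -mulr_suml powRM ?powR_ge0 ?sumr_ge0 // powRK ?gt_eqF.
rewrite (big_morph (fun x => x / d) (fun x y => maxr_pMl x y d0') (mul0r _)).
by apply: eq_bigr => j _; rewrite normrM (ger0_norm d0').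
Qed.

Lemma lp_norm_eq1P (p : R) v : 0 < p ->
  lp_norm p%:E v = 1 <-> \sum_j `|v j| `^ p = 1.
Proof.
move=> p0 /=; split => [|->]; last by rewrite powR1.
move/eqP; rewrite powR_eq1 invr_eq0 (gt_eqF p0) orbF ltNge sumr_ge0 //=.
by rewrite orbF => /eqP.
Qed.

Lemma lp_unit_normr_eq1 (p : R) v j : 0 < p -> lp_norm p%:E v = 1 -> `|v j| = 1 ->
  forall k, v k = if k == j then v j else 0.
Proof.
move=> p0 /(lp_norm_eq1P _ p0); rewrite (bigD1 j) //= => + vj k.
rewrite vj powR1 => sum1; have sum0 : \sum_(i | i != j) `|v i| `^ p = 0 by lra.
case: eqP => [->//|/eqP kj].
by have /powR_eq0_eq0/normr0_eq0 := psumr_eq0P (fun i _ => powR_ge0 _ _) sum0 kj.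
Qed.

Lemma lp_norm_le1_of_lt (p : R) q v : 0 < p -> (p%:E < q)%E -> lp_norm p%:E v = 1 ->
  lp_norm q v <= 1 /\ (lp_norm q v = 1 -> exists j, `|v j| = 1).
Proof.
move=> p0 pq v1; have v_le1 j : `|v j| <= 1 by rewrite -v1 ler_lp_norm.
case: q pq => [q||] //= pq; last first.
  split; first by apply: bigmax_le => // j _; exact: v_le1.
  move/eqP; rewrite eq_le => /andP[_ /bigmax_geP[|[j _ vj]]]; first by rewrite ler10.
  by exists j; apply/eqP; rewrite eq_le v_le1.
rewrite lte_fin in pq; have q0 := lt_trans p0 pq.
have qV_gt0 : 0 < q^-1 by rewrite invr_gt0.
have le_pow j : `|v j| `^ q <= `|v j| `^ p ?= iff (`|v j| == 0) || (`|v j| == 1).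
  by apply: powR_leif_gt; rewrite ?normr_ge0 ?v_le1 ?p0.
have := leif_sum (fun j (_ : true) => le_pow j).
rewrite ((lp_norm_eq1P _ p0).1 v1) -(powR_leif _ qV_gt0) ?sumr_ge0 // powR1.
move=> [le1 eq1]; split => // /eqP; rewrite eq1 => /forall_inP zero_or_one.
have [j vj] : exists j, v j != 0 by apply: (lp_norm_neq0 (p := p%:E)); rewrite ?lte_fin ?v1.
by exists j; move: (zero_or_one j isT); rewrite normr_eq0 (negbTE vj) => /eqP.
Qed.

Lemma lp_norm_le_of_gt (p0 p : R) v : (0 < n)%N -> 0 < p0 < p -> lp_norm p%:E v = 1 ->
  lp_norm p0%:E v <= n%:R `^ (p0^-1 - p^-1) /\
  (lp_norm p0%:E v = n%:R `^ (p0^-1 - p^-1) -> forall j, `|v j| = n%:R `^ (- p^-1)).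
Proof.
move=> n0 /andP[p0_gt0 p0_lt_p] v1; have p_gt0 := lt_trans p0_gt0 p0_lt_p.
have p0V_gt0 : 0 < p0^-1 by rewrite invr_gt0.
pose r := p0 / p; have r01 : 0 < r < 1 by rewrite divr_gt0 //= ltr_pdivrMr // mul1r.
have Epow j : `|v j| `^ p0 = (`|v j| `^ p) `^ r.
  by rewrite -powRrM /r mulrC divfK ?gt_eqF.
have EM : n%:R `^ (p0^-1 - p^-1) = (n%:R `^ (1 - r)) `^ p0^-1.
  by rewrite -powRrM /r; congr (_ `^ _); field; rewrite !gt_eqF.
have := sum_powR_leif n0 r01 (fun j => powR_ge0 _ _) ((lp_norm_eq1P _ p_gt0).1 v1).
rewrite -(powR_leif _ p0V_gt0) ?sumr_ge0 ?powR_ge0 // -EM.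
rewrite -(eq_bigr _ (fun j _ => Epow j)) => -[le_M eq_M]; split => // /eqP.
rewrite eq_M => /forallP vj_eq j; have /eqP vj := vj_eq j.
rewrite -[`|v j|](powRK (lt0r_neq0 p_gt0)) // vj -powR_inv1 ?ler0n //.
by rewrite -powRrM mulN1r.
Qed.

End LpNorm.

Section Permanent.
Variables (R : realType) (n : nat).
Implicit Types (A B : 'M[R]_n).

Lemma per_scale_rows (d : 'I_n -> R) A :
  per (\matrix_(i, j) (d i * A i j)) = \prod_i d i * per A.
Proof.
rewrite /per mulr_sumr; apply: eq_bigr => s _.
by rewrite -big_split /=; apply: eq_bigr => i _; rewrite mxE.
Qed.

Lemma per_le_fact B : (forall i j, `|B i j| <= 1) -> per B <= n`!%:R.
Proof.
move=> B1; apply: le_trans (ler_norm _) _; apply: le_trans (ler_norm_sum _ _ _) _.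
rewrite -card_Sn -sumr_const; apply: ler_sum => s _; rewrite normr_prod.
by apply: prodr_ile1 => i _; rewrite normr_ge0 B1.
Qed.

Lemma per1 : per (1%:M : 'M[R]_n) = 1.
Proof.
rewrite /per (bigD1 1%g) //= [X in _ + X]big1 => [|s s1].
  by rewrite addr0 big1 // => i _; rewrite perm1 mxE eqxx.
have /existsP[i si] : [exists i, s i != i].
  apply: contraNT s1 => /existsPn fix_s; apply/eqP/permP => i.
  by rewrite perm1; apply/eqP/negPn/fix_s.
by rewrite (bigD1 i) //= mxE eq_sym (negbTE si) mul0r.
Qed.

Lemma per_const_mx (a : R) : per (const_mx a : 'M[R]_n) = n`!%:R * a ^+ n.
Proof.
rewrite /per (eq_bigr (fun=> a ^+ n)) ?sumr_const ?card_Sn ?mulr_natl // => s _.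
by rewrite (eq_bigr (fun=> a)) ?prodr_const ?card_ord // => i _; rewrite mxE.
Qed.

Lemma per_le_U p B : (0 < p)%E -> rows_lp_unit p B -> per B <= U n p.
Proof.
move=> p0 B1; apply: ub_le_sup; last by exists B.
exists n`!%:R => _ [C /(rows_lp_unitE _ p0) C1 <-]; apply: per_le_fact => i j.
by rewrite -(C1 i) ler_lp_norm.
Qed.

Lemma U_eq_per p B0 : rows_lp_unit p B0 ->
  (forall B, rows_lp_unit p B -> per B <= per B0) -> U n p = per B0.
Proof.
move=> B01 B0_max; apply/eqP; rewrite eq_le; apply/andP; split.
  by apply: ge_sup; [exists (per B0), B0 | move=> _ [B B1 <-]; exact: B0_max].
by apply: ub_le_sup; [exists (per B0) => _ [B B1 <-]; exact: B0_max | exists B0].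
Qed.

End Permanent.

Section RowNormalization.
Variables (R : realType) (n : nat) (p : \bar R).
Hypothesis p_gt0 : (0 < p)%E.
Implicit Types (A : 'M[R]_n).

Definition row_normalize A : 'M[R]_n := \matrix_(i, j) (A i j / lp_norm p (A i)).

Lemma rows_lp_unit_normalize A : (forall i, exists j, A i j != 0) ->
  rows_lp_unit p (row_normalize A).
Proof.
move=> A0; apply/(rows_lp_unitE _ p_gt0) => i.
have -> : row_normalize A i = fun j => A i j / lp_norm p (A i).
  by apply: funext => j; rewrite mxE.
by rewrite lp_norm_divr ?divff // ?gt_eqF ?lp_norm_gt0.
Qed.

Lemma per_row_normalize A : (forall i, exists j, A i j != 0) ->
  per A = \prod_i lp_norm p (A i) * per (row_normalize A).
Proof.
move=> A0; rewrite -per_scale_rows; congr per; apply/matrixP => i j.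
by rewrite !mxE mulrC divfK // gt_eqF // lp_norm_gt0.
Qed.

Lemma per_le_rownorm_U (M : R) A : 0 < U n p -> (forall i, exists j, A i j != 0) ->
  (forall i, lp_norm p (A i) <= M) ->
  per A <= M ^+ n * U n p /\ (per A = M ^+ n * U n p -> forall i, lp_norm p (A i) = M).
Proof.
move=> U0 A0 le_M; rewrite per_row_normalize //.
have d0 i : 0 < lp_norm p (A i) by rewrite lp_norm_gt0.
have [D_le D_eq] := @leif_pprod _ _ predT _ (fun i => lp_norm p (A i)) (fun=> M)
  (fun i _ => ltW (d0 i)) (fun i _ => leif_eq (le_M i)).
rewrite /= prodr_const card_ord in D_le D_eq.
have D0 : 0 < \prod_i lp_norm p (A i) by rewrite prodr_gt0.
have B_le := per_le_U p_gt0 (rows_lp_unit_normalize A0).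
set D := \prod_i _ in D_le D_eq D0 *; set b := per _ in B_le *.
have Mn0 : 0 < M ^+ n := lt_le_trans D0 D_le.
split; first by have [b0|b0] := lerP 0 b; nra.
move=> eqD i; have /eqP : D = M ^+ n by nra.
by rewrite D_eq (gt_eqF Mn0) => /forall_inP/(_ i isT)/eqP.
Qed.

End RowNormalization.

Section Extremizers.
Variables (R : realType) (n : nat).

Lemma rows_lp_unit1 (p : R) : 0 < p -> rows_lp_unit p%:E (1%:M : 'M[R]_n).
Proof.
move=> p0 i /=; rewrite (bigD1 i) //= big1 ?addr0 => [|j ji].
  by rewrite mxE eqxx normr1 !powR1.
by rewrite mxE eq_sym (negbTE ji) normr0 powR0 ?gt_eqF.
Qed.

Lemma rows_lp_unit_const (p : R) : (0 < n)%N -> 0 < p ->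
  rows_lp_unit p%:E (const_mx (n%:R `^ (- p^-1)) : 'M[R]_n).
Proof.
move=> n0 p0 i; apply/(lp_norm_eq1P _ p0).
have entry (j : 'I_n) : `|const_mx (n%:R `^ (- p^-1)) i j| `^ p = n%:R^-1 :> R.
  rewrite mxE ger0_norm ?powR_ge0 // -powRrM mulNr mulVf ?gt_eqF //.
  by rewrite powR_inv1 ?ler0n.
rewrite (eq_bigr _ (fun j _ => entry j)) sumr_const card_ord.
by rewrite -[_ *+ n]mulr_natr mulVf // pnatr_eq0 -lt0n.
Qed.

Lemma per_const_powR (p : R) : (0 < n)%N ->
  per (const_mx (n%:R `^ (- p^-1)) : 'M[R]_n) = n`!%:R / n%:R `^ (n%:R / p).
Proof.
move=> n0; rewrite per_const_mx !powR_natE // -expRM_natr -expRN.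
by congr (_ * expR _); ring.
Qed.

Lemma powR_mul_fact_div (p0 p : R) : (0 < n)%N -> p0 != 0 -> p != 0 ->
  (n%:R `^ (p0^-1 - p^-1)) ^+ n * (n`!%:R / n%:R `^ (n%:R / p0)) =
  n`!%:R / n%:R `^ (n%:R / p).
Proof.
move=> n0 p0_neq0 p_neq0; rewrite !powR_natE // -expRM_natr mulrCA -expRB -expRN.
by congr (_ * expR _); field; apply/andP.
Qed.

Lemma per_le_of_row_bound (p : R) (q : \bar R) (M : R) (E : ('I_n -> R) -> Prop)
    (A : 'M[R]_n) : 0 < p -> (0 < q)%E -> 0 < U n q ->
  (forall v, lp_norm p%:E v = 1 -> lp_norm q v <= M /\ (lp_norm q v = M -> E v)) ->
  rows_lp_unit p%:E A ->
  per A <= M ^+ n * U n q /\ (per A = M ^+ n * U n q -> forall i, E (A i)).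
Proof.
move=> p0 q0 U0 row_bound /(rows_lp_unitE _ (p0 : (0 < p%:E)%E)) A1.
have A0 i : exists j, A i j != 0.
  by apply: (lp_norm_neq0 (p := p%:E)); rewrite ?lte_fin ?A1.
have [le_M eq_M] := per_le_rownorm_U q0 U0 A0 (fun i => (row_bound _ (A1 i)).1).
by split => // /eq_M eqA i; apply: (row_bound _ (A1 i)).2.
Qed.

End Extremizers.

Theorem lemma1p2 (R : realType) (n : nat) (hn : (0 < n)%N) :
  (* (i) *)
  (forall p0 : \bar R, (1%:E < p0)%E -> U n p0 = 1 ->
     forall p : R, 1 <= p -> (p%:E < p0)%E ->
       U n p%:E = 1 /\
       (forall A : 'M[R]_n, rows_lp_unit p%:E A -> per A = 1 ->
          forall i : 'I_n, exists (j : 'I_n) (e : R), (e = 1 \/ e = -1) /\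
            forall k : 'I_n, A i k = (if k == j then e else 0)))
  /\
  (* (ii) *)
  (forall p0 : R, 1 <= p0 ->
     U n p0%:E = (n`!)%:R / (n%:R `^ (n%:R / p0)) ->
     forall p : R, p0 < p ->
       U n p%:E = (n`!)%:R / (n%:R `^ (n%:R / p)) /\
       (forall A : 'M[R]_n, rows_lp_unit p%:E A ->
          per A = (n`!)%:R / (n%:R `^ (n%:R / p)) ->
          forall i j : 'I_n, `|A i j| = n%:R `^ (- p^-1))).
Proof.
split=> [p0 p0_gt1 Up0 p p_ge1 p_lt_p0 | p0 p0_ge1 Up0 p p0_lt_p].
  have p_gt0 : 0 < p := lt_le_trans ltr01 p_ge1.
  have p0_gt0 : (0 < p0)%E by apply: lt_trans p0_gt1; rewrite lte_fin.
  have U_gt0 : 0 < U n p0 by rewrite Up0.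
  have := per_le_of_row_bound (M := 1) p_gt0 p0_gt0 U_gt0
    (fun v => lp_norm_le1_of_lt p_gt0 p_lt_p0).
  rewrite Up0 expr1n mul1r => extremal.
  split=> [|A A1 perA i].
    rewrite -(per1 R n); apply: U_eq_per (rows_lp_unit1 (n := n) p_gt0) _.
    by rewrite per1 => A /extremal[].
  have [_ /(_ perA i) [j Aij]] := extremal A A1.
  exists j, (A i j); split; last exact: lp_unit_normr_eq1 p_gt0 (A1 i) Aij.
  by move/eqP: Aij; rewrite eqr_norml ler01 andbT => /orP[] /eqP; [left|right].
have p0_gt0 : 0 < p0 := lt_le_trans ltr01 p0_ge1.
have p_gt0 := lt_trans p0_gt0 p0_lt_p.
have p0p : 0 < p0 < p by rewrite p0_gt0 p0_lt_p.
have U_gt0 : 0 < U n p0%:E by rewrite Up0 divr_gt0 ?powR_gt0 ?ltr0n ?fact_gt0.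
have := per_le_of_row_bound p_gt0 (p0_gt0 : (0 < p0%:E)%E) U_gt0
  (fun v => lp_norm_le_of_gt hn p0p).
rewrite Up0 powR_mul_fact_div ?gt_eqF // => extremal.
split=> [|A A1 perA i j]; last by have [_ /(_ perA i j)] := extremal _ A1.
rewrite -(per_const_powR p hn); apply: U_eq_per (rows_lp_unit_const hn p_gt0) _.
by rewrite per_const_powR // => A /extremal[].
Qed.
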